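(* Let $n$ be a positive integer, let $p\ge q$ be positive integers, and let $B$ be a $p\times q$ matrix with nonnegative real entries. For each positive divisor $k$ of $n$, let $F_k$ be the symmetric block matrix of size $kq+\frac{n}{k}p$ whose block rows and columns have sizes, in order, $p$, then $q$ repeated $k$ times, then $p$ repeated $\frac{n}{k}-1$ times; the block in a size-$p$ block row and a size-$q$ block column is $B$, the block in a size-$q$ block row and a size-$p$ block column is $B^T$, and all other blocks are zero. Then the normalized Laplacians $L\big(F_k\oplus 0_{(n-\frac{n}{k})p+(1-k)q}\big)$, as $k$ ranges over all positive divisors of $n$, are pairwise cospectral.
   Context: For matrices $X,Y$, $X\oplus Y=\begin{bmatrix} X&0\\0&Y\end{bmatrix}$; $0_m$ is the $m\times m$ zero matrix. For a nonnegative real symmetric matrix $M$ with positive row sums, its normalized Laplacian is $L(M)=I-\Delta^{-1/2}M\Delta^{-1/2}$, where $\Delta$ is the diagonal matrix of row sums of $M$. If $M$ has zero row sums, write (after a simultaneous permutation of rows and columns) $M=M_1\oplus 0_k$ where $M_1$ has positive row sums; then $L(M)=L(M_1)\oplus I_k$. Two square matrices are cospectral if they have the same eigenvalues with the same multiplicities. *)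

From HB Require Import structures.
From mathcomp Require Import all_boot all_order all_algebra.
Set Implicit Arguments.
Unset Strict Implicit.
Unset Printing Implicit Defensive.
Import Order.TTheory GRing.Theory Num.Theory.
Local Open Scope ring_scope.

Definition dsum (R : pzRingType) m n (X : 'M[R]_m) (Y : 'M[R]_n) : 'M[R]_(m + n) :=
  block_mx X 0 0 Y.

Definition rowsums (R : rcfType) N (M : 'M[R]_N) : 'I_N -> R :=
  fun i => \sum_(j < N) M i j.

(* Normalized Laplacian L(M) = I - D^{-1/2} M D^{-1/2}, where D^{-1/2} is the
   diagonal matrix with entries (d_i)^{-1/2}, with the convention that the
   entry is 0 when d_i = 0 (MathComp's 0^-1 = 0).  For a nonnegative M, a zero
   row sum means a zero row (and column, by symmetry), so this gives exactly
   L(M_1) (+) I_k after the simultaneous permutation described in the paper. *)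
Definition normLap (R : rcfType) N (M : 'M[R]_N) : 'M[R]_N :=
  let Dih := diag_mx (\row_i (Num.sqrt (rowsums M i))^-1) in
  1%:M - Dih *m M *m Dih.

(* Cospectral: same eigenvalues with the same (algebraic) multiplicities,
   i.e. equal characteristic polynomials (this also forces equal sizes). *)
Definition cospectral (R : rcfType) m n (A : 'M[R]_m) (C : 'M[R]_n) : Prop :=
  char_poly A = char_poly C.

Definition Fk (R : rcfType) (n p q k : nat) (B : 'M[R]_(p, q)) :
  'M[R]_(p + ((\sum_(j < k) q)%N + (\sum_(i < (n %/ k).-1) p)%N)) :=
  let Rrow : 'M[R]_(p, \sum_(j < k) q) := \mxrow_(j < k) B in
  let Mqp : 'M[R]_(\sum_(j < k) q, \sum_(i < (n %/ k).-1) p) :=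
    \mxblock_(j < k, i < (n %/ k).-1) B^T in
  block_mx (0 : 'M[R]_(p, p)) (row_mx Rrow 0)
           (col_mx Rrow^T 0) (block_mx 0 Mqp Mqp^T 0).

Definition Fk_padded (R : rcfType) (n p q k : nat) (B : 'M[R]_(p, q)) :=
  dsum (Fk n k B) (0 : 'M[R]_((n - n %/ k) * p + q - k * q)).

(* F_k (+) 0 factors as E M E^T, where M = [0 B; B^T 0] is the bipartite
   matrix of B and E is a 0/1 matrix with at most one 1 per row that clones
   every vertex of the p-side n/k times and every vertex of the q-side k times.
   Such an E commutes with diagonal degree scalings, so Sylvester's identity
   x^r det(x + U G) = x^N det(x + G U) shows that L(E M E^T) has, apart from
   extra eigenvalues 1, the spectrum of I - D M D, where D^-2 = diag(M d) / d
   for the vector d of clone counts.  As M is bipartite, this rescales the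
   degrees of one side by k / (n/k) and those of the other by its inverse,
   which cancel in D M D: for every k one gets L(M), padded by eigenvalues 1
   up to the common size n p + q. *)

From HB Require Import structures.
From mathcomp Require Import all_boot all_order all_algebra.
From mathcomp Require Import zify.
Set Implicit Arguments. Unset Strict Implicit. Unset Printing Implicit Defensive.
Import Order.TTheory GRing.Theory Num.Theory.
Local Open Scope ring_scope.

Lemma det_scalar_add_mulmxC (R : comNzRingType) N r
    (U : 'M[R]_(N, r)) (G : 'M[R]_(r, N)) (x : R) :
  x ^+ r * \det (x%:M + U *m G) = x ^+ N * \det (x%:M + G *m U).
Proof.
pose S := block_mx (x%:M : 'M_N) (- U) G (1%:M : 'M_r).
have reduceU : block_mx 1%:M U 0 1%:M *m S = block_mx (x%:M + U *m G) 0 G 1%:M.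
  by rewrite mulmx_block !mul1mx !mul0mx !mulmx1 add0r addNr add0r.
have reduceG :
    block_mx 1%:M 0 (- G) x%:M *m S = block_mx x%:M (- U) 0 (x%:M + G *m U).
  rewrite mulmx_block !mul1mx !mul0mx !addr0 mul_scalar_mx mulNmx mul_mx_scalar.
  by rewrite addNr mulmx1 mulNmx mulmxN opprK addrC.
have := congr1 determinant reduceU; have := congr1 determinant reduceG.
rewrite !det_mulmx !det_ublock !det_lblock !det1 !det_scalar !mul1r !mulr1.
by move=> <- ->.
Qed.

Lemma char_poly_1B_mulmxC (R : comNzRingType) N r
    (U : 'M[R]_(N, r)) (G : 'M[R]_(r, N)) :
  ('X - 1) ^+ r * char_poly (1%:M - U *m G)
  = ('X - 1) ^+ N * char_poly (1%:M - G *m U).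
Proof.
have char_poly_mx_1B P Q (V : 'M[R]_(P, Q)) W :
    char_poly_mx (1%:M - V *m W) = ('X - 1)%:M + map_mx polyC V *m map_mx polyC W.
  by rewrite /char_poly_mx map_mxB map_mx1 map_mxM opprB addrA addrAC raddfB.
by rewrite /char_poly !char_poly_mx_1B det_scalar_add_mulmxC.
Qed.

Section SelectionMatrices.
Variable R : comNzRingType.

Definition selection_mx N r (E : 'M[R]_(N, r)) :=
  forall i, exists o : option 'I_r, forall c, E i c = (o == Some c)%:R.

Lemma selection_mx0 N r : selection_mx (0 : 'M[R]_(N, r)).
Proof. by move=> i; exists None => c; rewrite mxE. Qed.

Lemma selection_mx1 N : selection_mx (1%:M : 'M[R]_N).
Proof. by move=> i; exists (Some i) => c; rewrite mxE. Qed.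

Lemma selection_col_mx N1 N2 r (A : 'M[R]_(N1, r)) (C : 'M[R]_(N2, r)) :
  selection_mx A -> selection_mx C -> selection_mx (col_mx A C).
Proof.
move=> selA selC i; case: (split_ordP i) => j ->.
  by have [o Ao] := selA j; exists o => c; rewrite col_mxEu Ao.
by have [o Co] := selC j; exists o => c; rewrite col_mxEd Co.
Qed.

Lemma selection_row_mx0 N r1 r2 (A : 'M[R]_(N, r1)) :
  selection_mx A -> selection_mx (row_mx A (0 : 'M_(N, r2))).
Proof.
move=> selA i; have [o Ao] := selA i.
exists (omap (lshift r2) o) => c; case: (split_ordP c) => j ->.
  by rewrite row_mxEl Ao; case: o {Ao} => //= c'.
by rewrite row_mxEr mxE; case: o {Ao} => //= c'; rewrite (inj_eq Some_inj) eq_lrshift.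
Qed.

Lemma selection_row_0mx N r1 r2 (A : 'M[R]_(N, r2)) :
  selection_mx A -> selection_mx (row_mx (0 : 'M_(N, r1)) A).
Proof.
move=> selA i; have [o Ao] := selA i.
exists (omap (@rshift r1 r2) o) => c; case: (split_ordP c) => j ->.
  by rewrite row_mxEl mxE; case: o {Ao} => //= c'; rewrite (inj_eq Some_inj) eq_rlshift.
rewrite row_mxEr Ao; case: o {Ao} => //= c'.
by rewrite !(inj_eq Some_inj) (inj_eq (@rshift_inj _ _)).
Qed.

Lemma selection_mxcol1 k q : selection_mx (\mxcol_(j < k) (1%:M : 'M[R]_q)).
Proof. by move=> s; exists (Some (tagnat.sig2 s)) => c; rewrite !mxE. Qed.

Lemma selection_diag_mulmx N r (E : 'M[R]_(N, r)) (w : 'cV[R]_r) (f : R -> R) :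
  selection_mx E ->
  diag_mx (map_mx f (E *m w))^T *m E = E *m diag_mx (map_mx f w)^T.
Proof.
move=> selE; apply/matrixP => i c; rewrite mul_diag_mx mul_mx_diag !mxE.
have [[c'|] Ei] := selE i; last by rewrite Ei mulr0 mul0r.
rewrite (bigD1 c') //= big1 => [|j /negbTE jc']; last first.
  by rewrite Ei (inj_eq Some_inj) eq_sym jc' mul0r.
rewrite !Ei !(inj_eq Some_inj) eqxx mul1r addr0.
by have [->|] := eqVneq c' c; rewrite ?mulr1 ?mul1r ?mulr0 ?mul0r.
Qed.

Lemma selection_tr_mulmx N r (E : 'M[R]_(N, r)) :
  selection_mx E -> E^T *m E = diag_mx (E^T *m const_mx 1)^T.
Proof.
move=> selE; apply/matrixP => c c'; rewrite !mxE -sumrMnl.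
apply: eq_bigr => i _; rewrite !mxE mulr1.
have [[x|] Ei] := selE i; rewrite !Ei /= ?mul0r ?mul0rn //.
rewrite !(inj_eq Some_inj).
have [<-|xc] := eqVneq x c; last by rewrite mul0r mul0rn.
by rewrite mul1r.
Qed.

End SelectionMatrices.

Section NormalizedAdjacency.
Variable R : rcfType.

Definition rsqrt (x : R) := (Num.sqrt x)^-1.

Lemma rsqrtM x y : 0 <= x -> rsqrt (x * y) = rsqrt x * rsqrt y.
Proof. by move=> x_ge0; rewrite /rsqrt sqrtrM // invfM. Qed.

Lemma sqrtr_mul_rsqrt x d : 0 < d -> Num.sqrt d * rsqrt x = rsqrt (x / d).
Proof.
move=> d_gt0; rewrite [x / d]mulrC rsqrtM ?invr_ge0 ?ltW //.
by rewrite /rsqrt sqrtrV ?ltW // invrK.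
Qed.

Definition normAdj N (w : 'cV[R]_N) (M : 'M[R]_N) :=
  let D := diag_mx (map_mx rsqrt w)^T in D *m M *m D.

Lemma normAdjE N (w : 'cV[R]_N) M i j :
  normAdj w M i j = rsqrt (w i 0) * M i j * rsqrt (w j 0).
Proof. by rewrite /normAdj mul_mx_diag mul_diag_mx !mxE. Qed.

Lemma normLapE N (M : 'M[R]_N) : normLap M = 1%:M - normAdj (M *m const_mx 1) M.
Proof.
have rowsumsE :
    \row_i (Num.sqrt (rowsums M i))^-1 = (map_mx rsqrt (M *m const_mx 1))^T.
  apply/rowP => i; rewrite !mxE /rowsums /rsqrt.
  by under [in RHS]eq_bigr do rewrite mxE mulr1.
by rewrite /normLap /normAdj /= rowsumsE.
Qed.

Lemma char_poly_normLap_selection N r (E : 'M[R]_(N, r)) (M : 'M[R]_r) (d : 'cV_r) :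
  selection_mx E -> E^T *m (const_mx 1 : 'cV_N) = d -> (forall c, 0 < d c 0) ->
  ('X - 1) ^+ r * char_poly (normLap (E *m M *m E^T))
  = ('X - 1) ^+ N * char_poly (1%:M - normAdj (\col_c ((M *m d) c 0 / d c 0)) M).
Proof.
move=> selE colsumE d_gt0.
have EtE : E^T *m E = diag_mx d^T by rewrite -colsumE; exact: selection_tr_mulmx.
have rowsumsE : E *m M *m E^T *m const_mx 1 = E *m (M *m d).
  by rewrite -colsumE -!mulmxA.
have sqrt_d_neq0 c : Num.sqrt (d c 0) != 0 by rewrite sqrtr_eq0 -ltNge d_gt0.
pose Phi := diag_mx (map_mx rsqrt (M *m d))^T.
pose S := diag_mx (map_mx Num.sqrt d)^T.
pose Si := diag_mx (map_mx rsqrt d)^T.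
have PhiE : diag_mx (map_mx rsqrt (E *m (M *m d)))^T *m E = E *m Phi.
  exact: selection_diag_mulmx.
have EPhi : E^T *m diag_mx (map_mx rsqrt (E *m (M *m d)))^T = Phi *m E^T.
  by rewrite -[LHS]trmxK trmx_mul trmxK tr_diag_mx PhiE trmx_mul tr_diag_mx.
have SiS : Si *m S = 1%:M.
  rewrite mulmx_diag -diag_const_mx; congr diag_mx; apply/rowP => c.
  by rewrite !mxE /rsqrt mulVf.
have dSi : diag_mx d^T *m Si = S.
  rewrite mulmx_diag; congr diag_mx; apply/rowP => c; rewrite !mxE /rsqrt.
  by rewrite -{1}(sqr_sqrtr (ltW (d_gt0 c))) expr2 mulfK.
have SPhi : S *m Phi = diag_mx (map_mx rsqrt (\col_c ((M *m d) c 0 / d c 0)))^T.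
  by rewrite mulmx_diag; congr diag_mx; apply/rowP => c; rewrite !mxE sqrtr_mul_rsqrt.
have PhiS : Phi *m S = S *m Phi.
  by rewrite !mulmx_diag; congr diag_mx; apply/rowP => c; rewrite !mxE mulrC.
(* Split E Phi M Phi E^T as (E S^-1) (S Phi M Phi E^T); once the factors
   are swapped, E^T E = S^2 collapses the middle. *)
have -> :
    normLap (E *m M *m E^T) = 1%:M - (E *m Si) *m (S *m Phi *m M *m Phi *m E^T).
  rewrite normLapE rowsumsE /normAdj; congr (_ - _).
  set D := diag_mx _ in PhiE EPhi *.
  by rewrite !mulmxA PhiE -(mulmxA E Si S) SiS mulmx1 -!mulmxA EPhi.
rewrite char_poly_1B_mulmxC; congr (_ * char_poly (_ - _)).
by rewrite /normAdj -SPhi -!mulmxA (mulmxA E^T) EtE dSi PhiS.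
Qed.

Definition bipartite_mx p q (B : 'M[R]_(p, q)) : 'M[R]_(p + q) := block_mx 0 B B^T 0.

Lemma normAdj_bipartite_rescale p q (B : 'M[R]_(p, q)) (u : 'cV_p) (v : 'cV_q) a :
  0 < a ->
  normAdj (col_mx (a *: u) (a^-1 *: v)) (bipartite_mx B)
  = normAdj (col_mx u v) (bipartite_mx B).
Proof.
move=> a_gt0; have [a_ge0 a_neq0] := (ltW a_gt0, lt0r_neq0 a_gt0).
have rsqrt_aV : rsqrt a * rsqrt a^-1 = 1.
  by rewrite -rsqrtM // mulfV // /rsqrt sqrtr1 invr1.
apply/matrixP => i j; rewrite !normAdjE /bipartite_mx.
case: (split_ordP i) => i' ->; case: (split_ordP j) => j' ->;
  rewrite ?block_mxEul ?block_mxEur ?block_mxEdl ?block_mxEdr ?col_mxEu ?col_mxEd;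
  rewrite !mxE ?mulr0 ?mul0r // !rsqrtM ?invr_ge0 //.
- by rewrite -(mulrA _ _ (B _ _)) mulrACA rsqrt_aV mul1r.
- by rewrite -(mulrA _ _ (B _ _)) mulrACA [rsqrt a^-1 * _]mulrC rsqrt_aV mul1r.
Qed.

Lemma bipartite_mx_mul_col p q (B : 'M[R]_(p, q)) (x : 'cV_p) (y : 'cV_q) :
  bipartite_mx B *m col_mx x y = col_mx (B *m y) (B^T *m x).
Proof. by rewrite /bipartite_mx mul_block_col !mul0mx add0r addr0. Qed.

Lemma normAdj_bipartite_balanced p q (B : 'M[R]_(p, q)) (a b : R) (d : 'cV_(p + q)) :
  0 < a -> 0 < b -> d = col_mx (const_mx a) (const_mx b) ->
  normAdj (\col_c ((bipartite_mx B *m d) c 0 / d c 0)) (bipartite_mx B)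
  = normAdj (bipartite_mx B *m const_mx 1) (bipartite_mx B).
Proof.
move=> a_gt0 b_gt0 dE.
have -> : \col_c ((bipartite_mx B *m d) c 0 / d c 0)
    = col_mx ((b / a) *: (B *m (const_mx 1 : 'cV_q)))
             ((b / a)^-1 *: (B^T *m (const_mx 1 : 'cV_p))).
  apply/colP => c; rewrite mxE dE bipartite_mx_mul_col invf_div.
  case: (split_ordP c) => i ->; rewrite ?col_mxEu ?col_mxEd !mxE mulrAC mulr_sumr;
    by congr (_ / _); apply: eq_bigr => j _; rewrite !mxE mulr1 mulrC.
by rewrite normAdj_bipartite_rescale ?divr_gt0 // -col_mx_const bipartite_mx_mul_col.
Qed.

Lemma char_poly_normLap_bipartite_selection N p q (B : 'M[R]_(p, q))
    (E : 'M[R]_(N, p + q)) (a b : R) :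
  0 < a -> 0 < b -> selection_mx E ->
  E^T *m (const_mx 1 : 'cV_N) = col_mx (const_mx a) (const_mx b) ->
  ('X - 1) ^+ (p + q) * char_poly (normLap (E *m bipartite_mx B *m E^T))
  = ('X - 1) ^+ N * char_poly (normLap (bipartite_mx B)).
Proof.
move=> a_gt0 b_gt0 selE colsumE.
rewrite (char_poly_normLap_selection _ selE colsumE); last first.
  by move=> c; case: (split_ordP c) => i ->; rewrite ?col_mxEu ?col_mxEd mxE.
by rewrite (normAdj_bipartite_balanced _ a_gt0 b_gt0 (erefl _)) -normLapE.
Qed.

End NormalizedAdjacency.

Lemma tr_mxcol1_mul_const (R : pzRingType) k q :
  (\mxcol_(j < k) (1%:M : 'M[R]_q))^T *m const_mx 1 = const_mx k%:R :> 'cV_q.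
Proof.
rewrite tr_mxcol -[const_mx 1](@mxcol_const _ _ (fun _ : 'I_k => q)) mul_mxrow_mxcol.
under eq_bigr do rewrite trmx1 mul1mx.
by rewrite sumr_const card_ord; apply/colP => i; rewrite mulmxnE !mxE.
Qed.

Lemma mul_row_mx_const (R : pzRingType) m n1 n2 l
    (A : 'M[R]_(m, n1)) (C : 'M[R]_(m, n2)) a :
  row_mx A C *m const_mx a = A *m const_mx a + C *m (const_mx a : 'M_(n2, l)).
Proof. by rewrite -col_mx_const mul_row_col. Qed.

Lemma dsum_mulmx_tr0 (R : pzRingType) N r l (E : 'M[R]_(N, r)) (M : 'M[R]_r) :
  dsum (E *m M *m E^T) (0 : 'M_l) = col_mx E 0 *m M *m (col_mx E 0)^T.
Proof. by rewrite /dsum mul_col_mx tr_col_mx mul_col_row !trmx0 !mulmx0 !mul0mx. Qed.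

Section FkSelection.
Variables (R : rcfType) (n p q k : nat) (B : 'M[R]_(p, q)).
Local Notation m := (n %/ k)%N.

(* Each block row of F_k copies the p-side or the q-side of [bipartite_mx B];
   this matrix records which. *)
Definition Fk_selection :
    'M[R]_(p + ((\sum_(j < k) q)%N + (\sum_(i < m.-1) p)%N), p + q) :=
  col_mx (row_mx 1%:M 0)
         (col_mx (row_mx 0 (\mxcol_(j < k) 1%:M)) (row_mx (\mxcol_(i < m.-1) 1%:M) 0)).

Definition Fk_padded_selection :
    'M[R]_(p + ((\sum_(j < k) q)%N + (\sum_(i < m.-1) p)%N) + ((n - m) * p + q - k * q),
           p + q) :=
  col_mx Fk_selection 0.

Lemma Fk_factor : Fk n k B = Fk_selection *m bipartite_mx B *m Fk_selection^T.
Proof.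
rewrite /Fk /Fk_selection /bipartite_mx !mul_col_mx !mul_row_block.
rewrite !tr_col_mx !tr_row_mx !mul_mx_row !mul_row_col !block_mxEv !mul0mx !mulmx0.
rewrite !mul1mx !addr0 !add0r !trmx0 !trmx1 !mulmx1 !mul0mx !mulmx0 !addr0 !add0r.
rewrite -block_mxEh block_mxEv.
congr (col_mx _ (col_mx (row_mx _ (row_mx _ _)) (row_mx _ (row_mx _ _)))).
- rewrite tr_mxcol mul_mxrow; congr (row_mx _ (row_mx _ _)).
  by apply: eq_mxrow => j; rewrite trmx1 mulmx1.
- by rewrite tr_mxrow mxcol_mul; apply: eq_mxcol => j; rewrite mul1mx.
- rewrite tr_mxcol mxcol_mul mul_mxcol_mxrow.
  by apply: eq_mxblock => i j; rewrite mul1mx trmx1 mulmx1.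
- rewrite tr_mxblock tr_mxcol mxcol_mul mul_mxcol_mxrow.
  by apply: eq_mxblock => i j; rewrite trmxK mul1mx trmx1 mulmx1.
Qed.

Lemma selection_Fk_padded_selection : selection_mx Fk_padded_selection.
Proof.
apply/selection_col_mx/selection_mx0/selection_col_mx.
  exact/selection_row_mx0/selection_mx1.
apply: selection_col_mx.
  exact/selection_row_0mx/selection_mxcol1.
exact/selection_row_mx0/selection_mxcol1.
Qed.

Lemma Fk_padded_selection_colsum : (0 < m)%N ->
  Fk_padded_selection^T *m const_mx 1
  = col_mx (const_mx m%:R : 'cV_p) (const_mx k%:R : 'cV_q).
Proof.
move=> m_gt0.
rewrite /Fk_padded_selection /Fk_selection !tr_col_mx !mul_row_mx_const trmx0 mul0mx addr0.
rewrite !tr_row_mx !mul_col_mx !trmx0 !mul0mx trmx1 mul1mx !tr_mxcol1_mul_const.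
rewrite !add_col_mx !addr0 !add0r; congr col_mx; apply/colP => i.
by rewrite !mxE -[in RHS](prednK m_gt0) -addn1 natrD addrC.
Qed.

Lemma Fk_padded_factor :
  Fk_padded n k B = Fk_padded_selection *m bipartite_mx B *m Fk_padded_selection^T.
Proof. by rewrite /Fk_padded Fk_factor dsum_mulmx_tr0. Qed.

End FkSelection.

Lemma Fk_padded_size n p q k : (0 < n)%N -> (q <= p)%N -> (k %| n)%N ->
  (p + ((\sum_(j < k) q)%N + (\sum_(i < (n %/ k).-1) p)%N)
     + ((n - n %/ k) * p + q - k * q) = n * p + q)%N.
Proof.
rewrite !sum_nat_const !card_ord => n_gt0 le_qp /dvdnP[m n_eq]; subst n.
have [m_gt0 k_gt0] : (0 < m)%N /\ (0 < k)%N by apply/andP; rewrite -muln_gt0.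
rewrite mulnK //.
have : ((k - 1) * q <= (k - 1) * (m * p))%N.
  by rewrite leq_mul // (leq_trans le_qp) // leq_pmull.
nia.
Qed.

Lemma char_poly_normLap_Fk_padded (R : rcfType) n p q k (B : 'M[R]_(p, q)) :
  (0 < n)%N -> (q <= p)%N -> (k %| n)%N ->
  ('X - 1) ^+ (p + q) * char_poly (normLap (Fk_padded n k B))
  = ('X - 1) ^+ (n * p + q) * char_poly (normLap (bipartite_mx B)).
Proof.
move=> n_gt0 le_qp dvd_kn.
have k_gt0 : (0 < k)%N := dvdn_gt0 n_gt0 dvd_kn.
have m_gt0 : (0 < n %/ k)%N by rewrite divn_gt0 // dvdn_leq.
rewrite -(Fk_padded_size n_gt0 le_qp dvd_kn) Fk_padded_factor.
apply: (@char_poly_normLap_bipartite_selection _ _ _ _ _ _ (n %/ k)%:R k%:R);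
  rewrite ?ltr0n //; first exact: selection_Fk_padded_selection.
exact: Fk_padded_selection_colsum.
Qed.

Theorem theorem3p6 (R : rcfType) (n p q : nat) (B : 'M[R]_(p, q)) :
  (0 < n)%N -> (0 < q)%N -> (q <= p)%N ->
  (forall i j, 0 <= B i j) ->
  forall k1 k2 : nat, (k1 %| n)%N -> (k2 %| n)%N ->
  cospectral (normLap (Fk_padded n k1 B)) (normLap (Fk_padded n k2 B)).
Proof.
move=> n_gt0 _ le_qp _ k1 k2 dvd_k1n dvd_k2n.
have X1_neq0 : ('X - 1 : {poly R}) ^+ (p + q) != 0.
  by rewrite expf_neq0 // -polyC1 polyXsubC_eq0.
apply: (mulfI X1_neq0).
by rewrite !char_poly_normLap_Fk_padded.
Qed.
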